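(* Let $a=(p_a,Rd_a,Wt_a)\in\mathsf{Lab}$ and $\beta\in\mathsf{Lab}\uplus\underline{\mathsf{Lab}}$ with $\mathsf{und}(\beta)=(p_\beta,Rd_\beta,Wt_\beta)$, and assume $Wt_a\subseteq Rd_a$ and $Wt_\beta\subseteq Rd_\beta$. Suppose $A\to_{ann}^{a}A'$ and $A\to_{ann}^{\beta}A''$ with $a\;\iota_{lab}\;\beta$. Then there is an annotation DAG $A'''$ such that $A''\to_{ann}^{a}A'''$ and $\mathsf{diff}(A\to_{ann}^{a}A')=\mathsf{diff}(A''\to_{ann}^{a}A''')$.
   Context: Fix a set $\mathcal{R}$ of memory resources. Let $\mathsf{PID}=(\mathbb{N}_+)^*$ be the set of finite words over the positive integers, with $\preceq$ the prefix order. An annotation DAG is a triple $A=(V,E_R,E_W)$ such that: (1) $V\subseteq(\mathsf{PID}\times\mathbb{N})\cup\{\bot\}$ is finite, $\bot\in V$, and $(p,n)\in V$ implies $(p,n')\in V$ for all $n'\le n$; (2) $E_R,E_W\subseteq V\times\mathcal{R}\times V$, and $(v',r,v),(v'',r,v)\in E_R\cup E_W$ implies $v'=v''$; (3) $E_R\cap E_W=\varnothing$ and the directed graph $(V,E_R\cup E_W)$ is acyclic; (4) if $(v',r,v)\in E_W$ and $v'\neq\bot$ then $(v'',r,v')\in E_W$ for some $v''$; (5) $(v,r,v'),(v,r,v'')\in E_W$ implies $v'=v''$. For $r\in\mathcal{R}$, $\mathsf{last}(r,E_W)$ is $\bot$ if $E_W$ has no edge labelled $r$, and otherwise is the final node of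 the unique path from $\bot$ consisting of all $E_W$-edges labelled $r$. For $p\in\mathsf{PID}$, $\mathsf{max}_p(V)=\max\{n:(p,n)\in V\}$, or $-1$ if there is no such $n$. Let $\mathsf{Lab}=\mathsf{PID}\times2^{\mathcal{R}}\times2^{\mathcal{R}}$ and $\underline{\mathsf{Lab}}=\{\underline{a}:a\in\mathsf{Lab}\}$ a disjoint copy; $\mathsf{und}(a)=\mathsf{und}(\underline a)=a$. For $a=(p,Rd,Wt)\in\mathsf{Lab}$ and annotation DAGs $A_1=(V_1,E_{R1},E_{W1})$, $A_2=(V_2,E_{R2},E_{W2})$, write $A_1\to_{ann}^{a}A_2$ iff, with $v=(p,\mathsf{max}_p(V_1)+1)$ and $\mathsf{newedge}(r,E_W,v)=(\mathsf{last}(r,E_W),r,v)$: $V_2=V_1\cup\{v\}$, $E_{R2}=E_{R1}\cup\{\mathsf{newedge}(r,E_{W1},v): r\in Rd\setminus Wt\}$, $E_{W2}=E_{W1}\cup\{\mathsf{newedge}(r,E_{W1},v): r\in Wt\}$; and write $A_2\to_{ann}^{\underline a}A_1$ iff $A_1\to_{ann}^{a}A_2$. For $\alpha,\beta\in\mathsf{Lab}\uplus\underline{\mathsf{Lab}}$ with $\mathsf{und}(\alpha)=(p_1,Rd_1,Wt_1)$, $\mathsf{und}(\beta)=(p_2,Rd_2,Wt_2)$, define $\alpha\;\iota_{lab}\;\beta$ iff $p_1\not\preceq p_2$, $p_2\not\preceq p_1$, $Rd_1\cap Wt_2=\varnothing$ and $Rd_2\cap Wt_1=\varnothing$. For $o:(V,E_R,E_W)\to_{ann}^{\alpha}(V',E'_R,E'_W)$,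 $\mathsf{diff}(o)=(V'\setminus V,E'_R\setminus E_R,E'_W\setminus E_W)$ if $\alpha\in\mathsf{Lab}$ and $\mathsf{diff}(o)=(V\setminus V',E_R\setminus E'_R,E_W\setminus E'_W)$ if $\alpha\in\underline{\mathsf{Lab}}$. (In the paper, labels arise from basic blocks for which the set of written resources is contained in the set of read resources; this is recorded here as the hypothesis $Wt\subseteq Rd$.) *)

From Stdlib Require Import List PArith Relations.
Import ListNotations.
Set Implicit Arguments.

Definition PID := list positive.
Definition prefix (p1 p2 : PID) : Prop := exists s, p2 = p1 ++ s.

Definition Node := option (PID * nat).
Definition bot : Node := None.

Section Defs.
Variable Res : Type.

Definition Edge := (Node * Res * Node)%type.

Record annot := Annot {
  aV  : Node -> Prop;
  aER : Edge -> Prop;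
  aEW : Edge -> Prop }.

Definition step_rel (A : annot) (u v : Node) : Prop :=
  exists r, aER A (u, r, v) \/ aEW A (u, r, v).

Definition is_annot_dag (A : annot) : Prop :=
  (exists l : list Node, forall v, aV A v -> In v l) /\
  aV A bot /\
  (forall p n n', aV A (Some (p, n)) -> n' <= n -> aV A (Some (p, n'))) /\
  (forall v' r v, aER A (v', r, v) \/ aEW A (v', r, v) -> aV A v' /\ aV A v) /\
  (forall v' v'' r v, aER A (v', r, v) \/ aEW A (v', r, v) ->
                      aER A (v'', r, v) \/ aEW A (v'', r, v) -> v' = v'') /\
  (forall e, ~ (aER A e /\ aEW A e)) /\
  (forall v, ~ clos_trans Node (step_rel A) v v) /\
  (forall v' r v, aEW A (v', r, v) -> v' <> bot -> exists v'', aEW A (v'', r, v')) /\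
  (forall v r v' v'', aEW A (v, r, v') -> aEW A (v, r, v'') -> v' = v'').

Fixpoint r_path (EW : Edge -> Prop) (r : Res) (x : Node) (l : list Node) : Prop :=
  match l with
  | [] => True
  | y :: l' => EW (x, r, y) /\ r_path EW r y l'
  end.

Definition is_last (EW : Edge -> Prop) (r : Res) (u : Node) : Prop :=
  ((forall x y, ~ EW (x, r, y)) /\ u = bot) \/
  (exists l : list Node, l <> [] /\ r_path EW r bot l /\
     (forall x y, EW (x, r, y) -> exists l1 l2, bot :: l = l1 ++ x :: y :: l2) /\
     u = last l bot).

(* k = max_p(V) + 1 (so k = 0 when max_p(V) = -1) *)
Definition next_idx (V : Node -> Prop) (p : PID) (k : nat) : Prop :=
  (k = 0 /\ forall n, ~ V (Some (p, n))) \/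
  (exists n, k = S n /\ V (Some (p, n)) /\ forall n', V (Some (p, n')) -> n' <= n).

Definition Lab := (PID * (Res -> Prop) * (Res -> Prop))%type.
(* Lab ⊎ underlined Lab : inl a = a, inr a = underline a *)
Definition LabU := (Lab + Lab)%type.
Definition und (al : LabU) : Lab := match al with inl a => a | inr a => a end.

Definition ann_step (A1 : annot) (a : Lab) (A2 : annot) : Prop :=
  let '(p, Rd, Wt) := a in
  is_annot_dag A1 /\ is_annot_dag A2 /\
  exists k, next_idx (aV A1) p k /\
    let v := Some (p, k) in
    (forall x, aV A2 x <-> aV A1 x \/ x = v) /\
    (forall e, aER A2 e <-> aER A1 e \/
        exists r u, Rd r /\ ~ Wt r /\ is_last (aEW A1) r u /\ e = (u, r, v)) /\
    (forall e, aEW A2 e <-> aEW A1 e \/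
        exists r u, Wt r /\ is_last (aEW A1) r u /\ e = (u, r, v)).

Definition ann_stepU (A1 : annot) (al : LabU) (A2 : annot) : Prop :=
  match al with
  | inl a => ann_step A1 a A2
  | inr a => ann_step A2 a A1
  end.

Definition iota_lab (al be : LabU) : Prop :=
  let '(p1, Rd1, Wt1) := und al in
  let '(p2, Rd2, Wt2) := und be in
  ~ prefix p1 p2 /\ ~ prefix p2 p1 /\
  (forall r, ~ (Rd1 r /\ Wt2 r)) /\ (forall r, ~ (Rd2 r /\ Wt1 r)).

Definition diff (A1 : annot) (al : LabU) (A2 : annot) : annot :=
  match al with
  | inl _ => Annot (fun x => aV A2 x /\ ~ aV A1 x)
                   (fun e => aER A2 e /\ ~ aER A1 e)
                   (fun e => aEW A2 e /\ ~ aEW A1 e)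
  | inr _ => Annot (fun x => aV A1 x /\ ~ aV A2 x)
                   (fun e => aER A1 e /\ ~ aER A2 e)
                   (fun e => aEW A1 e /\ ~ aEW A2 e)
  end.

Definition annot_eq (A B : annot) : Prop :=
  (forall x, aV A x <-> aV B x) /\
  (forall e, aER A e <-> aER B e) /\
  (forall e, aEW A e <-> aEW B e).

Definition subset (X Y : Res -> Prop) : Prop := forall r, X r -> Y r.

End Defs.

From Stdlib Require Import List Relations.
From Stdlib Require Import Lia Arith.
Import ListNotations.
Set Implicit Arguments.
Unset Strict Implicit.

(* A step labelled a = (p, Rd, Wt) from A is determined by two pieces of data
   read off A: the fresh index k = max_p(V) + 1, and the values last(r, E_W)
   for r in Rd (Wt is contained in Rd).  Its diff is exactly the "fresh part"
   built from this data: the new node (p, k) and the new read/write edges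
   into it (they are new because an annotation DAG only has edges between its
   own nodes, and (p, k) is not a node).

   A step labelled beta independent of a, in either direction, adds or
   removes a node of a process different from p and only write edges labelled
   by resources of Wt_beta, which is disjoint from Rd.  Hence A and A'' agree
   on the nodes of p and on the write edges labelled in Rd, so they yield the
   same fresh index and the same last(r, E_W) for r in Rd. *)

Lemma last_cons_default (T : Type) (t : list T) :
  forall (a x : T), last (a :: t) x = last t a.
Proof.
  induction t as [|b t IH]; intros a x; [reflexivity|].
  change (last (a :: b :: t) x) with (last (b :: t) x).
  rewrite (IH b x), (IH b a). reflexivity.
Qed.

Lemma last_app_cons (T : Type) (l1 : list T) :
  forall x m d, last (l1 ++ x :: m) d = last m x.
Proof.
  induction l1 as [|c l1 IH]; intros x m d.
  - apply last_cons_default.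
  - change ((c :: l1) ++ x :: m) with (c :: (l1 ++ x :: m)).
    rewrite last_cons_default. apply IH.
Qed.

Section Paths.
Variable Res : Type.

Lemma r_path_ext (E1 E2 : Edge Res -> Prop) r :
  (forall x y, E1 (x, r, y) <-> E2 (x, r, y)) ->
  forall l x, r_path E1 r x l <-> r_path E2 r x l.
Proof.
  intros H; induction l as [|y l IH]; intros x; simpl; [tauto|].
  rewrite H, IH. tauto.
Qed.

Lemma is_last_ext (E1 E2 : Edge Res -> Prop) r u :
  (forall x y, E1 (x, r, y) <-> E2 (x, r, y)) ->
  is_last E1 r u <-> is_last E2 r u.
Proof.
  intros H; unfold is_last.
  pose proof (r_path_ext H) as Hp.
  split; intros [[N Hu]|[l [Hl [Hpath [Hc Hu]]]]].
  - left; split; auto. intros x y Hxy; apply (N x y), H, Hxy.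
  - right; exists l; repeat split; auto.
    + apply Hp; auto.
    + intros x y Hxy; apply Hc, H, Hxy.
  - left; split; auto. intros x y Hxy; apply (N x y), H, Hxy.
  - right; exists l; repeat split; auto.
    + apply Hp; auto.
    + intros x y Hxy; apply Hc, H, Hxy.
Qed.

Lemma r_path_last_edge (E : Edge Res -> Prop) r l :
  forall x, r_path E r x l -> l <> [] -> exists z, E (z, r, last l x).
Proof.
  induction l as [|y t IH]; intros x Hp Hne; [congruence|].
  destruct Hp as [He Hp]. rewrite last_cons_default.
  destruct t as [|b t']; [exists x; exact He|].
  apply IH; auto; discriminate.
Qed.

Lemma r_path_suffix (E : Edge Res -> Prop) r l1 :
  forall h t x m, r_path E r h t -> h :: t = l1 ++ x :: m -> r_path E r x m.
Proof.
  induction l1 as [|c l1 IH]; intros h t x m Hp Heq; simpl in Heq.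
  - injection Heq as -> ->. exact Hp.
  - injection Heq as -> Ht. destruct t as [|y t'].
    + destruct l1; discriminate.
    + destruct Hp as [_ Hp]. eapply IH; eauto.
Qed.

Lemma r_path_app (E : Edge Res -> Prop) r l :
  forall x m, r_path E r x (l ++ m) -> r_path E r (last l x) m.
Proof.
  induction l as [|y t IH]; intros x m Hp; simpl in Hp; [exact Hp|].
  destruct Hp as [_ Hp]. rewrite last_cons_default. apply IH; auto.
Qed.

Lemma r_path_comparable (E : Edge Res -> Prop) r :
  (forall v v' v'', E (v, r, v') -> E (v, r, v'') -> v' = v'') ->
  forall l l' x, r_path E r x l -> r_path E r x l' ->
  (exists m, l' = l ++ m) \/ (exists m, l = l' ++ m).
Proof.
  intros Hfun; induction l as [|y t IH]; intros l' x Hp Hp'.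
  - left; exists l'; reflexivity.
  - destruct l' as [|y' t'].
    + right; exists (y :: t); reflexivity.
    + destruct Hp as [He Hp]; destruct Hp' as [He' Hp'].
      assert (y = y') by (eapply Hfun; eauto). subst y'.
      destruct (IH t' y Hp Hp') as [[m Hm]|[m Hm]];
        [left|right]; exists m; simpl; congruence.
Qed.

Lemma r_path_clos_trans (A : annot Res) r l :
  forall x, r_path (aEW A) r x l -> l <> [] ->
  clos_trans Node (step_rel A) x (last l x).
Proof.
  induction l as [|y t IH]; intros x Hp Hne; [congruence|].
  destruct Hp as [He Hp]. rewrite last_cons_default.
  assert (Hs : step_rel A x y) by (exists r; right; exact He).
  destruct t as [|b t']; [apply t_step; exact Hs|].
  eapply t_trans; [apply t_step; exact Hs|]. apply IH; auto; discriminate.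
Qed.

End Paths.

Section LastWrite.
Variable Res : Type.
Variable A : annot Res.
Hypothesis HA : is_annot_dag A.

Lemma dag_edge_ends x r y :
  aER A (x, r, y) \/ aEW A (x, r, y) -> aV A x /\ aV A y.
Proof. apply HA. Qed.

Lemma dag_acyclic v : ~ clos_trans Node (step_rel A) v v.
Proof. apply HA. Qed.

Lemma dag_write_functional r v v' v'' :
  aEW A (v, r, v') -> aEW A (v, r, v'') -> v' = v''.
Proof. apply HA. Qed.

(* last(r, E_W) has no outgoing r-write edge: otherwise, since the path from
   bot covers every r-write edge, that edge closes a cycle. *)
Lemma is_last_no_successor r u y : is_last (aEW A) r u -> ~ aEW A (u, r, y).
Proof.
  intros [[N _]|[l [Hl [Hp [Hc ->]]]]]; [apply N|]. intros He.
  destruct (Hc _ _ He) as [l1 [l2 Heq]].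
  assert (Hsuffix : r_path (aEW A) r (last l bot) (y :: l2))
    by exact (r_path_suffix Hp Heq).
  assert (Hend : last (y :: l2) (last l bot) = last l bot).
  { rewrite <- (last_app_cons l1 (last l bot) (y :: l2) bot), <- Heq.
    apply last_cons_default. }
  pose proof (r_path_clos_trans Hsuffix ltac:(discriminate)) as Hcycle.
  rewrite Hend in Hcycle. exact (dag_acyclic Hcycle).
Qed.

Lemma is_last_unique r u u' :
  is_last (aEW A) r u -> is_last (aEW A) r u' -> u = u'.
Proof.
  intros Hu Hu'.
  pose proof Hu as [[N ->]|[l [Hl [Hp [Hc ->]]]]];
  pose proof Hu' as [[N' ->]|[l' [Hl' [Hp' [Hc' ->]]]]].
  - reflexivity.
  - destruct l' as [|y t]; [congruence|]. destruct Hp' as [He _].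
    destruct (N _ _ He).
  - destruct l as [|y t]; [congruence|]. destruct Hp as [He _].
    destruct (N' _ _ He).
  - destruct (r_path_comparable (fun v => @dag_write_functional r v) Hp Hp')
      as [[m Hm]|[m Hm]]; destruct m as [|y m];
      try (rewrite app_nil_r in Hm; congruence); exfalso; subst.
    + destruct (r_path_app Hp') as [He _]. exact (is_last_no_successor Hu He).
    + destruct (r_path_app Hp) as [He _]. exact (is_last_no_successor Hu' He).
Qed.

Lemma is_last_in_V r u : is_last (aEW A) r u -> aV A u.
Proof.
  intros [[_ ->]|[l [Hl [Hp [_ ->]]]]]; [apply HA|].
  destruct (r_path_last_edge Hp Hl) as [z Hz].
  apply (dag_edge_ends (or_intror Hz)).
Qed.

End LastWrite.

Lemma next_idx_fresh (V : Node -> Prop) p k : next_idx V p k -> ~ V (Some (p, k)).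
Proof.
  intros [[-> H]|[n [-> [_ Hmax]]]]; [apply H|].
  intro HS; specialize (Hmax _ HS); lia.
Qed.

Lemma next_idx_unique (V : Node -> Prop) p k k' :
  next_idx V p k -> next_idx V p k' -> k = k'.
Proof.
  intros [[-> N]|[n [-> [Hn Hmax]]]] [[-> N']|[n' [-> [Hn' Hmax']]]].
  - reflexivity.
  - destruct (N _ Hn').
  - destruct (N' _ Hn).
  - specialize (Hmax _ Hn'); specialize (Hmax' _ Hn). f_equal; lia.
Qed.

Lemma next_idx_ext (V1 V2 : Node -> Prop) p k :
  (forall n, V1 (Some (p, n)) <-> V2 (Some (p, n))) ->
  next_idx V1 p k -> next_idx V2 p k.
Proof.
  intros H [[-> N]|[n [-> [Hn Hmax]]]].
  - left; split; auto. intros n Hn; apply (N n), H, Hn.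
  - right; exists n; repeat split.
    + apply H, Hn.
    + intros n' Hn'; apply Hmax, H, Hn'.
Qed.

Section Extension.
Variable Res : Type.

Definition fresh_part (EW : Edge Res -> Prop) (p : PID) (k : nat)
  (Rd Wt : Res -> Prop) : annot Res :=
  Annot (fun x => x = Some (p, k))
    (fun e => exists r u, Rd r /\ ~ Wt r /\ is_last EW r u /\ e = (u, r, Some (p, k)))
    (fun e => exists r u, Wt r /\ is_last EW r u /\ e = (u, r, Some (p, k))).

Definition extend (A0 : annot Res) (p : PID) (k : nat) (Rd Wt : Res -> Prop)
  : annot Res :=
  let F := fresh_part (aEW A0) p k Rd Wt in
  Annot (fun x => aV A0 x \/ aV F x)
    (fun e => aER A0 e \/ aER F e)
    (fun e => aEW A0 e \/ aEW F e).

Variables (A0 : annot Res) (p : PID) (k : nat) (Rd Wt : Res -> Prop).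
Hypothesis HA0 : is_annot_dag A0.
Hypothesis Hk : next_idx (aV A0) p k.

Lemma extend_edge_cases e :
  aER (extend A0 p k Rd Wt) e \/ aEW (extend A0 p k Rd Wt) e ->
  (aER A0 e \/ aEW A0 e) \/
  (exists r u, is_last (aEW A0) r u /\ e = (u, r, Some (p, k))).
Proof.
  simpl. intros [[H|[r [u [_ [_ [H1 H2]]]]]]|[H|[r [u [_ [H1 H2]]]]]]; auto;
    right; exists r, u; auto.
Qed.

(* The new node has no outgoing edge, so a path in the extension either ends
   at the new node or is a path of A0. *)
Lemma extend_clos_trans x y :
  clos_trans Node (step_rel (extend A0 p k Rd Wt)) x y ->
  x <> Some (p, k) /\ (y = Some (p, k) \/ clos_trans Node (step_rel A0) x y).
Proof.
  pose proof (next_idx_fresh Hk) as Hv.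
  intros H. apply clos_trans_t1n in H.
  induction H as [x y [r Hs]|x y z [r Hs] _ [Hy IH]].
  - destruct (extend_edge_cases Hs) as [Ho|[r0 [u [Hl He]]]].
    + destruct (dag_edge_ends HA0 Ho) as [Hx _]. split; [congruence|].
      right; apply t_step; exists r; auto.
    + injection He as -> -> ->. split; auto.
      intro E; apply Hv; rewrite <- E; eapply is_last_in_V; eauto.
  - destruct (extend_edge_cases Hs) as [Ho|[r0 [u [Hl He]]]].
    + destruct (dag_edge_ends HA0 Ho) as [Hx _]. split; [congruence|].
      destruct IH as [IH|IH]; auto. right; eapply t_trans; eauto.
      apply t_step; exists r; auto.
    + injection He as -> -> ->. congruence.
Qed.

Lemma extend_dag : is_annot_dag (extend A0 p k Rd Wt).
Proof.
  pose proof (next_idx_fresh Hk) as Hv.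
  pose proof HA0 as [Hfin [Hbot [Hdown [Hend [Huniq [Hdisj [Hac [Hpred Hfun]]]]]]]].
  split; [|split; [|split; [|split; [|split; [|split; [|split; [|split]]]]]]].
  - destruct Hfin as [l Hl]. exists (Some (p, k) :: l). simpl.
    intros x [Hx|Hx]; auto.
  - simpl; left; auto.
  - simpl. intros p' n n' [H|H] Hle; [left; eauto|].
    injection H as -> ->.
    destruct Hk as [[-> _]|[n0 [-> [Hn0 _]]]].
    + right; f_equal; f_equal; lia.
    + destruct (Nat.eq_dec n' (S n0)) as [E|E]; [subst; right; auto|].
      left; apply Hdown with n0; [exact Hn0|lia].
  - intros v' r y H. destruct (extend_edge_cases H) as [Ho|[r0 [u [Hl He]]]].
    + destruct (Hend _ _ _ Ho); simpl; auto.
    + injection He as -> -> ->. simpl.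
      split; [left; eapply is_last_in_V; eauto|right; auto].
  - intros v' v'' r y H1 H2.
    destruct (extend_edge_cases H1) as [Ho1|[r1 [u1 [Hl1 He1]]]];
    destruct (extend_edge_cases H2) as [Ho2|[r2 [u2 [Hl2 He2]]]].
    + eapply Huniq; eauto.
    + injection He2 as -> -> ->. destruct (Hend _ _ _ Ho1); contradiction.
    + injection He1 as -> -> ->. destruct (Hend _ _ _ Ho2); contradiction.
    + injection He1 as -> -> ->. injection He2 as -> ->.
      eapply is_last_unique; eauto.
  - simpl. intros e [[H1|[r1 [u1 [_ [N1 [_ He1]]]]]] [H2|[r2 [u2 [W2 [_ He2]]]]]].
    + eapply Hdisj; eauto.
    + subst e. destruct (Hend _ _ _ (or_introl H1)); contradiction.
    + subst e. destruct (Hend _ _ _ (or_intror H2)); contradiction.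
    + rewrite He1 in He2. injection He2 as _ ->. contradiction.
  - intros x H. destruct (extend_clos_trans H) as [Hx [Hy|Hy]];
      [congruence|eapply Hac; eauto].
  - simpl. intros v' r y [H|[r0 [u [_ [Hl He]]]]] Hne.
    + destruct (Hpred _ _ _ H Hne) as [z Hz]; exists z; left; auto.
    + injection He as -> -> ->.
      destruct Hl as [[_ E]|[l [Hl [Hp [_ ->]]]]]; [contradiction|].
      destruct (r_path_last_edge Hp Hl) as [z Hz]; exists z; left; auto.
  - simpl. intros x r y y' [H|[r0 [u [_ [Hl He]]]]] [H'|[r0' [u' [_ [Hl' He']]]]].
    + eapply Hfun; eauto.
    + injection He' as -> -> ->. exfalso; eapply is_last_no_successor; eauto.
    + injection He as -> -> ->. exfalso; eapply is_last_no_successor; eauto.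
    + injection He as -> -> ->. injection He' as _ _ ->. reflexivity.
Qed.

Lemma extend_step : ann_step A0 (p, Rd, Wt) (extend A0 p k Rd Wt).
Proof.
  split; [exact HA0|split; [exact extend_dag|]].
  exists k. split; [exact Hk|]. simpl. split; [|split]; intros; tauto.
Qed.

End Extension.

Lemma annot_eq_sym (Res : Type) (A B : annot Res) : annot_eq A B -> annot_eq B A.
Proof. intros [HV [HR HW]]; split; [|split]; intros; symmetry; auto. Qed.

Lemma annot_eq_trans (Res : Type) (A B C : annot Res) :
  annot_eq A B -> annot_eq B C -> annot_eq A C.
Proof.
  intros [HV [HR HW]] [HV' [HR' HW']]; split; [|split]; intros;
    [rewrite HV|rewrite HR|rewrite HW]; auto.
Qed.

(* The diff of a forward step is the fresh part of its source: the new node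
   is not in the source, hence neither is any edge touching it. *)
Lemma step_diff (Res : Type) (A A' : annot Res) p Rd Wt k :
  ann_step A (p, Rd, Wt) A' -> next_idx (aV A) p k ->
  annot_eq (diff A (inl (p, Rd, Wt)) A') (fresh_part (aEW A) p k Rd Wt).
Proof.
  intros [HA [_ [k' [Hk' [HV [HR HW]]]]]] Hk.
  rewrite <- (next_idx_unique Hk' Hk).
  pose proof (next_idx_fresh Hk') as Hv.
  assert (Hnew : forall e r u, e = (u, r, Some (p, k')) ->
                 ~ aER A e /\ ~ aEW A e).
  { intros e r u ->. split; intro H;
      [destruct (dag_edge_ends HA (or_introl H))|
       destruct (dag_edge_ends HA (or_intror H))]; contradiction. }
  split; [|split]; simpl.
  - intro x. rewrite HV. split; [intros [[H|H] H']; tauto|].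
    intros ->. auto.
  - intro e. rewrite HR. split; [intros [[H|H] H']; tauto|].
    intros Hf. pose proof Hf as [r [u [_ [_ [_ He]]]]].
    split; [right; exact Hf|exact (proj1 (Hnew _ _ _ He))].
  - intro e. rewrite HW. split; [intros [[H|H] H']; tauto|].
    intros Hf. pose proof Hf as [r [u [_ [_ He]]]].
    split; [right; exact Hf|exact (proj2 (Hnew _ _ _ He))].
Qed.

Definition agree_for (Res : Type) (p : PID) (Rd : Res -> Prop) (A B : annot Res) : Prop :=
  (forall n, aV A (Some (p, n)) <-> aV B (Some (p, n))) /\
  (forall r, Rd r -> forall x y, aEW A (x, r, y) <-> aEW B (x, r, y)).

Lemma agree_for_sym (Res : Type) p (Rd : Res -> Prop) A B :
  agree_for p Rd A B -> agree_for p Rd B A.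
Proof.
  intros [HV HW]; split; [intro n|intros r Hr x y]; symmetry; auto.
Qed.

Lemma independent_step_agree (Res : Type) (A1 A2 : annot Res) p Rd pb Rdb Wtb :
  ann_step A1 (pb, Rdb, Wtb) A2 -> p <> pb ->
  (forall r, ~ (Rd r /\ Wtb r)) -> agree_for p Rd A1 A2.
Proof.
  intros [_ [_ [kb [_ [HV [_ HW]]]]]] Hp Hdisj. split.
  - intro n; rewrite HV. split; [left; auto|].
    intros [H|H]; [exact H|injection H; intros; congruence].
  - intros r Hr x y. rewrite HW. split; [left; auto|].
    intros [H|[r0 [u [Hw [_ He]]]]]; [exact H|].
    injection He as _ -> _. destruct (Hdisj r0); auto.
Qed.

Lemma fresh_part_agree (Res : Type) (A B : annot Res) p k (Rd Wt : Res -> Prop) :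
  subset Wt Rd -> agree_for p Rd A B ->
  annot_eq (fresh_part (aEW A) p k Rd Wt) (fresh_part (aEW B) p k Rd Wt).
Proof.
  intros Hsub [_ HW].
  assert (Hlast : forall r u, Rd r -> is_last (aEW A) r u <-> is_last (aEW B) r u)
    by (intros r u Hr; apply is_last_ext, HW, Hr).
  split; [|split]; intro e; simpl.
  - tauto.
  - split; intros [r [u [H1 [H2 [H3 H4]]]]]; exists r, u;
      repeat split; auto; apply (Hlast r u H1); auto.
  - split; intros [r [u [H1 [H3 H4]]]]; exists r, u;
      repeat split; auto; apply (Hlast r u (Hsub r H1)); auto.
Qed.

Lemma not_prefix_neq (p q : PID) : ~ prefix p q -> p <> q.
Proof. intros Hnp ->. apply Hnp. exists []. symmetry; apply app_nil_r. Qed.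

Lemma independent_stepU_agree (Res : Type) (A A'' : annot Res) p Rd Wt be :
  ann_stepU A be A'' -> iota_lab (inl (p, Rd, Wt)) be ->
  is_annot_dag A'' /\ agree_for p Rd A A''.
Proof.
  destruct be as [[[pb Rdb] Wtb]|[[pb Rdb] Wtb]]; simpl;
    intros Hstep [Hnp [_ [Hdisj _]]];
    pose proof (not_prefix_neq Hnp) as Hp.
  - split; [apply Hstep|exact (independent_step_agree Hstep Hp Hdisj)].
  - split; [apply Hstep|].
    apply agree_for_sym; exact (independent_step_agree Hstep Hp Hdisj).
Qed.

Theorem mainTheorem3 (Res : Type) (a : Lab Res) (be : LabU Res)
  (A A' A'' : annot Res) :
  subset (snd a) (snd (fst a)) ->
  subset (snd (und be)) (snd (fst (und be))) ->
  ann_step A a A' ->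
  ann_stepU A be A'' ->
  iota_lab (inl a) be ->
  exists A''' : annot Res,
    ann_step A'' a A''' /\
    annot_eq (diff A (inl a) A') (diff A'' (inl a) A''').
Proof.
  intros Hsub _ Hstep Hbe Hiota.
  destruct a as [[p Rd] Wt]. simpl in Hsub.
  pose proof Hstep as [_ [_ [k [Hk _]]]].
  destruct (independent_stepU_agree Hbe Hiota) as [HA'' Hagree].
  assert (Hk'' : next_idx (aV A'') p k) by exact (next_idx_ext (proj1 Hagree) Hk).
  pose proof (extend_step Rd Wt HA'' Hk'') as Hstep''.
  exists (extend A'' p k Rd Wt). split; [exact Hstep''|].
  eapply annot_eq_trans; [exact (step_diff Hstep Hk)|].
  eapply annot_eq_trans; [exact (fresh_part_agree k Hsub Hagree)|].
  apply annot_eq_sym, (step_diff Hstep'' Hk'').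
Qed.
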